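(* Let $B\ge1$ be a constant, and let $G$ be a random bipartite graph sampled from $\mathcal{G}(n,m,p)$ with $n\le m$ and $\frac{8B\log m}{n}\le p\le1$. For any vector of positive integers $\mathbf{s}=(s_1,\ldots,s_n)$ with $\sum_{i=1}^n s_i\le m$ and $\frac{\max_i s_i}{\min_i s_i}\le B$, with high probability (probability tending to $1$ as $n\to\infty$), $G$ contains a left-saturating $\mathbf{s}$-matching.
   Context: $\mathcal{G}(|L|,|R|,p)$ is the distribution over bipartite graphs on vertex sets $L,R$ in which each edge $(i,j)$, $i\in L$, $j\in R$, is present independently with probability $p$; here $|L|=n$, $|R|=m$. $\log$ is natural. An $\mathbf{s}$-matching is a set $F$ of edges such that each $i\in L$ is incident to at most $s_i$ edges of $F$ and each vertex of $R$ to at most one; it is left-saturating if each $i\in L$ is incident to exactly $s_i$ edges of $F$. *)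

From HB Require Import structures.
From mathcomp Require Import all_boot all_order all_algebra.
From mathcomp Require Import reals exp.
Set Implicit Arguments. Unset Strict Implicit. Unset Printing Implicit Defensive.
Import Order.TTheory GRing.Theory Num.Theory.
Local Open Scope ring_scope.

Notation bigraph n m := {set ('I_n * 'I_m)%type}.

(* Probability of the graph E under G(n,m,p): edges independent with prob. p. *)
Definition gnmp_weight (R : realType) (n m : nat) (p : R) (E : bigraph n m) : R :=
  p ^+ #|E| * (1 - p) ^+ (n * m - #|E|)%N.

Definition gnmp_prob (R : realType) (n m : nat) (p : R) (A : pred (bigraph n m)) : R :=
  \sum_(E : bigraph n m | A E) gnmp_weight p E.

Definition is_s_matching (n m : nat) (s : 'I_n -> nat) (F : bigraph n m) : bool :=
  [forall i, #|[set j | (i, j) \in F]| <= s i]%N &&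
  [forall j, #|[set i | (i, j) \in F]| <= 1]%N.

Definition is_left_sat_s_matching (n m : nat) (s : 'I_n -> nat) (F : bigraph n m) : bool :=
  is_s_matching s F && [forall i, #|[set j | (i, j) \in F]| == s i].

Definition has_left_sat_s_matching (n m : nat) (s : 'I_n -> nat) (G : bigraph n m) : bool :=
  [exists F : bigraph n m, (F \subset G) && is_left_sat_s_matching s F].

(* By Hall's theorem with demands [s], if G has no left-saturating s-matching
   then some nonempty T in L has fewer than sigma(T) = \sum_(i in T) s_i
   neighbours, so G has no edge between T and some U in R with
   |U| = u_T := m - sigma(T) + 1.  A union bound over these pairs (T, U) bounds
   the failure probability by \sum_T C(m, u_T) (1 - p)^(|T| u_T).
   If |T| <= n/2, double counting with the balance condition gives
   sigma(T) n <= 2 B |T| u_T, and C(m, u_T) <= m^sigma(T); if |T| > n/2, then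
   C(m, u_T) <= m^u_T and n < 2 |T|.  Either way p >= 8 B log m / n bounds the
   term by m^-2 n^-|T| or m^-2 n^-(n - |T|), and the sum over all T is at most
   2 (1 + 1/n)^n / m^2 <= 2 e / n. *)

From mathcomp Require Import all_boot all_order all_algebra.
From mathcomp Require Import reals sequences exp.
From mathcomp Require Import zify ring lra.
Import Order.TTheory GRing.Theory Num.Theory.

Set Implicit Arguments. Unset Strict Implicit. Unset Printing Implicit Defensive.

Section Hall.
Variables I J : finType.
Implicit Types (G F : {set I * J}) (T : {set I}) (S : {set J}) (d : I -> nat).

Definition nbh G T : {set J} := [set j | [exists i in T, (i, j) \in G]].

Definition hall_condition d G := forall T, \sum_(i in T) d i <= #|nbh G T|.

Definition sat_matching d F :=
  (forall i, #|[set j | (i, j) \in F]| = d i) /\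
  (forall j, #|[set i | (i, j) \in F]| <= 1).

Definition restrict_cols G S := G :&: setX setT S.

Lemma nbhS G G' T T' : G \subset G' -> T \subset T' -> nbh G T \subset nbh G' T'.
Proof.
move=> /subsetP sG /subsetP sT; apply/subsetP => j; rewrite !inE.
by case/exists_inP => i /sT iT' /sG ijG'; apply/exists_inP; exists i.
Qed.

Lemma nbh_restrict_cols G S T : nbh G T :&: S \subset nbh (restrict_cols G S) T.
Proof.
apply/subsetP => j; rewrite !inE => /andP[/exists_inP[i iT ijG] jS].
by apply/exists_inP; exists i; rewrite // !inE ijG.
Qed.

Lemma sat_matching0 d : (forall i, d i = 0) -> sat_matching d set0.
Proof.
by move=> d0; split=> [i|j]; rewrite ?d0 (_ : [set _ | _] = set0) ?cards0 //;
  apply/setP=> k; rewrite !inE.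
Qed.

Lemma sat_matching1 i0 j0 : sat_matching (fun i => (i == i0 : nat)) [set (i0, j0)].
Proof.
split=> [i|j].
  have [->|ne] := eqVneq i i0.
    by rewrite (_ : [set _ | _] = [set j0]) ?cards1 //; apply/setP=> j; rewrite !inE xpair_eqE eqxx.
  rewrite (_ : [set _ | _] = set0) ?cards0 //.
  by apply/setP=> j; rewrite !inE xpair_eqE (negbTE ne).
rewrite -(cards1 i0) subset_leq_card //; apply/subsetP => i.
by rewrite !inE xpair_eqE => /andP[].
Qed.

Lemma sat_matchingU d d1 d2 F1 F2 S :
    (forall i, d i = d1 i + d2 i) ->
    F1 \subset setX setT S -> F2 \subset setX setT (~: S) ->
    sat_matching d1 F1 -> sat_matching d2 F2 -> sat_matching d (F1 :|: F2).
Proof.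
move=> dD /subsetP sF1 /subsetP sF2 [r1 c1] [r2 c2].
have inF1 i j : (i, j) \in F1 -> j \in S by move/sF1; rewrite inE => /andP[].
have inF2 i j : (i, j) \in F2 -> j \notin S by move/sF2; rewrite !inE => /andP[].
split=> [i|j].
  rewrite dD -r1 -r2 -cardsUI; set X := _ :&: _.
  have -> : X = set0.
    by apply/setP=> j; rewrite !inE; apply/negP=> /andP[/inF1 jS /inF2]; rewrite jS.
  by rewrite cards0 addn0; apply: eq_card => j; rewrite !inE.
case jS: (j \in S).
  rewrite (_ : [set _ | _] = [set i | (i, j) \in F1]) //; apply/setP=> i; rewrite !inE.
  by case: ((i, j) \in F2) / boolP => [/inF2|]; rewrite ?jS ?orbF.
rewrite (_ : [set _ | _] = [set i | (i, j) \in F2]) //; apply/setP=> i; rewrite !inE.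
by case: ((i, j) \in F1) / boolP => [/inF1|]; rewrite ?jS.
Qed.

Lemma hall_condition_in d G T :
  hall_condition d G ->
  hall_condition (fun i => if i \in T then d i else 0) (restrict_cols G (nbh G T)).
Proof.
move=> hallG T'; rewrite -big_mkcondr /=.
rewrite (eq_bigl (mem (T' :&: T))); last by move=> i; rewrite !inE.
apply: leq_trans (hallG _) (subset_leq_card _).
have inT : nbh G (T' :&: T) \subset nbh G (T' :&: T) :&: nbh G T.
  by rewrite subsetI subxx nbhS ?subsetIr.
exact: subset_trans inT (subset_trans (nbh_restrict_cols _ _ _) (nbhS (subxx _) (subsetIl _ _))).
Qed.

Lemma hall_condition_out d G T :
  \sum_(i in T) d i = #|nbh G T| -> hall_condition d G ->
  hall_condition (fun i => if i \in T then 0 else d i) (restrict_cols G (~: nbh G T)).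
Proof.
move=> tightT hallG T'.
rewrite (eq_bigr (fun i => if i \notin T then d i else 0)); last by move=> i _; case: (i \in T).
rewrite -big_mkcondr /= (eq_bigl (mem (T' :\: T))); last by move=> i; rewrite !inE andbC.
have := hallG (T' :|: T).
rewrite (big_setID T) /= [(T' :|: T) :&: T]setIC setKU setDUl setDv setU0 tightT.
have cover : nbh G (T' :|: T) \subset nbh (restrict_cols G (~: nbh G T)) T' :|: nbh G T.
  apply/subsetP => j; rewrite [j \in nbh G _]inE => /exists_inP[i].
  rewrite in_setU => /orP[iT'|iT] ijG; rewrite in_setU.
    case: (boolP (j \in nbh G T)) => [_|jT]; rewrite ?orbT // orbF.
    by rewrite inE; apply/exists_inP; exists i; rewrite // !inE ijG; rewrite inE in jT.
  by apply/orP; right; rewrite inE; apply/exists_inP; exists i.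
have := leq_trans (subset_leq_card cover) (leq_card_setU _ _).
by rewrite -/(nbh G T); lia.
Qed.

Lemma hall_condition_drop_edge d G i0 j0 :
    hall_condition d G -> 0 < d i0 ->
    (forall T, i0 \notin T -> 0 < \sum_(i in T) d i -> \sum_(i in T) d i < #|nbh G T|) ->
  hall_condition (fun i => d i - (i == i0)) (restrict_cols G (~: [set j0])).
Proof.
move=> hallG di0 slack T.
have delta : \sum_(i in T) (i == i0 : nat) = (i0 \in T).
  case: (boolP (i0 \in T)) => [i0T|i0T].
    by rewrite (bigD1 i0) //= eqxx big1 // => i /andP[_ /negbTE ->].
  by rewrite big1 // => i iT; case: eqVneq iT => // ->; rewrite (negbTE i0T).
have sumT : \sum_(i in T) d i = \sum_(i in T) (d i - (i == i0)) + (i0 \in T).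
  rewrite -delta -big_split /=; apply: eq_bigr => i _; rewrite subnK //.
  by case: eqVneq => // ->.
have cover : nbh G T \subset j0 |: nbh (restrict_cols G (~: [set j0])) T.
  apply/subsetP => j jN; rewrite in_setU1; case: eqVneq => //= jj0.
  by apply: (subsetP (nbh_restrict_cols _ _ _)); rewrite in_setI jN in_setC1 jj0.
have := leq_trans (subset_leq_card cover) (leq_card_setU _ _); rewrite cards1.
have := hallG T; case: (boolP (i0 \in T)) => [i0T|i0T] in sumT *; first lia.
have [|pos] := posnP (\sum_(i in T) d i); first lia.
by have := slack T i0T pos; lia.
Qed.

Lemma sat_matching_split d d1 d2 G S :
    (forall i, d i = d1 i + d2 i) ->
    (exists2 F1 : {set I * J}, F1 \subset restrict_cols G S & sat_matching d1 F1) ->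
    (exists2 F2 : {set I * J}, F2 \subset restrict_cols G (~: S) & sat_matching d2 F2) ->
  exists2 F : {set I * J}, F \subset G & sat_matching d F.
Proof.
move=> dD [F1 sF1 mF1] [F2 sF2 mF2]; exists (F1 :|: F2).
  by rewrite subUset (subset_trans sF1 (subsetIl _ _)) (subset_trans sF2 (subsetIl _ _)).
exact: sat_matchingU dD (subset_trans sF1 (subsetIr _ _)) (subset_trans sF2 (subsetIr _ _)) mF1 mF2.
Qed.

Theorem hall_sat_matching d G :
  hall_condition d G -> exists2 F : {set I * J}, F \subset G & sat_matching d F.
Proof.
have [k] := ubnP (\sum_i d i); elim: k d G => // k IH d G ltk hallG.
have [d0|] := boolP [forall i, d i == 0].
  by exists set0; [exact: sub0set | apply: sat_matching0 => i; apply/eqP/(forallP d0)].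
rewrite negb_forall => /existsP[i0]; rewrite -lt0n => di0.
have IHpart d1 d2 H : (forall i, d i = d1 i + d2 i) -> 0 < \sum_i d2 i ->
    hall_condition d1 H -> exists2 F : {set I * J}, F \subset H & sat_matching d1 F.
  move=> dD pos; apply: IH; move: ltk; rewrite (eq_bigr _ (fun i _ => dD i)) big_split /=.
  lia.
(* Either a set avoiding i0 with positive demand is tight and the instance
   splits along it, or every such set has slack and an edge at i0 can be
   matched greedily. *)
case: (boolP [exists T : {set I},
    [&& i0 \notin T, 0 < \sum_(i in T) d i & \sum_(i in T) d i == #|nbh G T|]]).
  case/existsP => T /and3P[i0T posT /eqP tightT].
  pose d1 i := if i \in T then d i else 0; pose d2 i := if i \in T then 0 else d i.
  have dD i : d i = d1 i + d2 i by rewrite /d1 /d2; case: ifP; rewrite ?addn0.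
  apply: (sat_matching_split dD).
    apply: IHpart dD _ (hall_condition_in T hallG).
    by rewrite (bigD1 i0) //= /d2 (negbTE i0T) ltn_addr.
  apply: IHpart (fun i => etrans (dD i) (addnC _ _)) _ (hall_condition_out tightT hallG).
  by rewrite /d1 -big_mkcond.
move=> notight.
have slack T : i0 \notin T -> 0 < \sum_(i in T) d i -> \sum_(i in T) d i < #|nbh G T|.
  move=> i0T posT; rewrite ltn_neqAle hallG andbT; apply: contraNneq notight => tightT.
  by apply/existsP; exists T; rewrite i0T posT tightT eqxx.
have /card_gt0P[j0] : 0 < #|nbh G [set i0]| by apply: leq_trans (hallG _); rewrite big_set1.
rewrite inE => /exists_inP[_ /set1P-> i0j0].
pose d1 i := (i == i0 : nat); pose d2 i := d i - (i == i0).
have dD i : d i = d1 i + d2 i by rewrite /d1 /d2 subnKC //; case: eqVneq => // ->.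
apply: (sat_matching_split (S := [set j0]) dD).
  by exists [set (i0, j0)]; [rewrite sub1set !inE i0j0 eqxx | exact: sat_matching1].
apply: IHpart (fun i => etrans (dD i) (addnC _ _)) _ (hall_condition_drop_edge j0 hallG di0 slack).
by rewrite /d1 (bigD1 i0) //= eqxx.
Qed.


Lemma hall_obstruction d G : (\sum_i d i <= #|J|)%N ->
    ~ (exists2 F : {set I * J}, F \subset G & sat_matching d F) ->
  exists T (U : {set J}),
    [/\ T != set0, #|U| = (#|J| - \sum_(i in T) d i).+1 & setX T U :&: G = set0].
Proof.
move=> d_le no_matching.
have [T ltT] : exists T, #|nbh G T| < \sum_(i in T) d i.
  case: (boolP [exists T, #|nbh G T| < \sum_(i in T) d i]) => [/existsP//|/existsPn hallG].
  by case: no_matching; apply: hall_sat_matching => T; rewrite leqNgt hallG.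
have dT_le : \sum_(i in T) d i <= \sum_i d i by rewrite [X in _ <= X](bigID (mem T)) leq_addr.
have : (#|J| - \sum_(i in T) d i).+1 <= #|~: nbh G T|.
  by rewrite [#|~: _|]cardsCs setCK; lia.
case/card_geqP => l [l_uniq l_size l_sub]; exists T, [set j in l]; split.
- by apply: contraTneq ltT => ->; rewrite big_set0.
- by rewrite cardsE (card_uniqP l_uniq).
apply/setP => -[i j]; rewrite !inE /=; apply/negP => /andP[/andP[iT jl] ijG].
move/(_ j jl): l_sub; rewrite in_setC => /negP; apply; rewrite inE.
by apply/exists_inP; exists i.
Qed.

End Hall.

Lemma sat_matching_has n m (s : 'I_n -> nat) (G F : bigraph n m) :
  F \subset G -> sat_matching s F -> has_left_sat_s_matching s G.
Proof.
move=> FG [rows cols]; apply/existsP; exists F; rewrite FG /=.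
by apply/andP; split; [apply/andP; split|]; apply/forallP => ?; rewrite ?rows ?cols.
Qed.

Local Open Scope ring_scope.

Section ProductSums.
Variables (R : comNzRingType) (T : finType).

Lemma prod_if_in (A : {set T}) (a b : R) :
  \prod_x (if x \in A then a else b) = a ^+ #|A| * b ^+ #|~: A|.
Proof.
rewrite (bigID (mem A)) /= -!prodr_const; congr (_ * _).
  by apply: eq_bigr => x ->.
by apply: eq_big => [x|x /negbTE ->]; rewrite ?inE.
Qed.

Lemma sum_prod_if (a b : R) :
  \sum_(A : {set T}) a ^+ #|A| * b ^+ #|~: A| = (a + b) ^+ #|T|.
Proof.
rewrite -prodr_const (bigA_distr 1 +%R (fun=> a) (fun=> b)).
by apply: eq_big => [A|A _]; rewrite ?inE ?prod_if_in.
Qed.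

End ProductSums.

Section RandomBigraph.
Variables (R : realType) (n m : nat) (p : R).
Hypotheses (p_ge0 : 0 <= p) (p_le1 : p <= 1).
Implicit Types (E X : bigraph n m) (A Q : pred (bigraph n m)).

Lemma gnmp_weightE E : gnmp_weight p E = p ^+ #|E| * (1 - p) ^+ #|~: E|.
Proof. by rewrite /gnmp_weight [#|~: E|]cardsCs setCK card_prod !card_ord. Qed.

Lemma gnmp_weight_ge0 E : 0 <= gnmp_weight p E.
Proof. by rewrite mulr_ge0 ?exprn_ge0 ?subr_ge0. Qed.

Lemma gnmp_prob_total : \sum_(E : bigraph n m) gnmp_weight p E = 1.
Proof.
under eq_bigr do rewrite gnmp_weightE.
by rewrite sum_prod_if subrKC expr1n.
Qed.

Lemma gnmp_probC A : gnmp_prob p A = 1 - gnmp_prob p (predC A).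
Proof. by rewrite -gnmp_prob_total (bigID A) /= addrK. Qed.

Lemma gnmp_prob_union_bound (K : finType) (P : pred K) (Ak : K -> pred (bigraph n m)) Q :
    (forall E, Q E -> exists2 k, P k & Ak k E) ->
  gnmp_prob p Q <= \sum_(k | P k) gnmp_prob p (Ak k).
Proof.
move=> cover; rewrite /gnmp_prob.
under [X in _ <= X]eq_bigr do rewrite big_mkcond.
rewrite exchange_big /= big_mkcond; apply: ler_sum => E _.
have wk_ge0 k : 0 <= (if Ak k E then gnmp_weight p E else 0).
  by case: ifP; rewrite ?gnmp_weight_ge0.
case: ifP => [/cover[k Pk AkE]|_]; last exact: sumr_ge0.
by rewrite (bigD1 k) //= AkE lerDl sumr_ge0.
Qed.

(* Forcing E to avoid X amounts to setting the edge probability to 0 on X. *)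
Lemma gnmp_prob_disjoint X : gnmp_prob p (fun E => X :&: E == set0) = (1 - p) ^+ #|X|.
Proof.
pose q e := if e \in X then 0 else p.
have -> : gnmp_prob p (fun E => X :&: E == set0) =
    \sum_(E : bigraph n m) \prod_e (if e \in E then q e else 1 - p).
  rewrite /gnmp_prob big_mkcond; apply: eq_bigr => E _; rewrite gnmp_weightE -prod_if_in.
  case: (set_0Vmem (X :&: E)) => [XE0|[e]].
    rewrite XE0 eqxx; apply: eq_bigr => e _; rewrite /q; case: ifP => // eE; case: ifP => // eX.
    by move/setP: XE0 => /(_ e); rewrite !inE eX eE.
  rewrite inE => /andP[eX eE].
  have /negbTE-> : X :&: E != set0 by apply/set0Pn; exists e; rewrite inE eX eE.
  by rewrite (bigD1 e) //= eE /q eX mul0r.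
rewrite -(bigA_distr 1 +%R) (eq_bigr (fun e => if e \in X then 1 - p else 1)).
  by rewrite prod_if_in expr1n mulr1.
by move=> e _; rewrite /q; case: (e \in X); rewrite /= ?add0r ?subrKC.
Qed.

End RandomBigraph.

Lemma bin_leq_exp (m k : nat) : ('C(m, k) <= m ^ k)%N.
Proof.
rewrite -(leq_pmul2r (fact_gt0 k)) bin_ffact; apply: leq_trans (leq_pmulr _ (fact_gt0 k)).
by elim: k => [|k IH]; rewrite ?ffactn0 // ffactnSr expnSr leq_mul // leq_subr.
Qed.

Lemma balanced_sum_le (R : numDomainType) (I : finType) (B : R) (s : I -> nat) (T : {set I}) :
    (forall i j, (s i)%:R <= B * (s j)%:R) ->
  #|~: T|%:R * (\sum_(i in T) s i)%:R <= B * #|T|%:R * (\sum_(j in ~: T) s j)%:R.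
Proof.
move=> s_bal; rewrite mulr_natl -sumr_const [X in _ <= _ * X]natr_sum mulr_sumr.
apply: ler_sum => j _; rewrite natr_sum mulrAC mulr_natr -sumr_const.
by apply: ler_sum => i _; apply: s_bal.
Qed.

Section SumBounds.
Variables (I : finType) (s : I -> nat).
Hypothesis s_gt0 : forall i, (0 < s i)%N.

Lemma card_leq_sum (A : {set I}) : (#|A| <= \sum_(i in A) s i)%N.
Proof. by rewrite -sum1_card leq_sum. Qed.

Lemma sum_setC (A : {set I}) : (\sum_i s i = \sum_(i in A) s i + \sum_(i in ~: A) s i)%N.
Proof. by rewrite (bigID (mem A)) /=; congr (_ + _); apply: eq_bigl => i; rewrite inE. Qed.

End SumBounds.

Section Exponential.
Variable R : realType.

Lemma expr_1DVn_le_e (n : nat) : (0 < n)%N -> (1 + n%:R^-1) ^+ n <= expR 1 :> R.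
Proof.
move=> n_gt0; apply: le_trans (_ : expR n%:R^-1 ^+ n <= _).
  by rewrite lerXn2r ?nnegrE ?addr_ge0 ?invr_ge0 ?expR_ge0 ?expR_ge1Dx.
by rewrite -expRM_natl mulfV ?pnatr_eq0 -?lt0n.
Qed.

Lemma expr_1Br_mul_le1 (M p : R) (K X : nat) :
  0 < M -> p <= 1 -> K%:R * ln M <= p * X%:R -> (1 - p) ^+ X * M ^+ K <= 1.
Proof.
move=> M_gt0 p_le1 hKX.
have q_le : (1 - p) ^+ X <= expR (- p) ^+ X.
  by rewrite lerXn2r ?nnegrE ?subr_ge0 ?expR_ge0 ?expR_ge1Dx.
have MK : M ^+ K = expR (K%:R * ln M) by rewrite expRM_natl lnK // posrE.
apply: le_trans (ler_wpM2r (exprn_ge0 _ (ltW M_gt0)) q_le) _.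
by rewrite MK -expRM_natl -expRD expR_le1 mulrN addrC subr_le0 [X%:R * _]mulrC.
Qed.

End Exponential.

Section BadPairs.
Variables (R : realType) (B p : R) (n m : nat).
Hypotheses (B_ge1 : 1 <= B) (n_gt0 : (0 < n)%N) (n_le_m : (n <= m)%N)
  (p_ge : 8 * B * ln m%:R / n%:R <= p) (p_le1 : p <= 1).
Variable s : 'I_n -> nat.
Hypotheses (s_gt0 : forall i, (0 < s i)%N) (s_sum : (\sum_i s i <= m)%N)
  (s_bal : forall i j, (s i)%:R <= B * (s j)%:R).

(* The hypothesis on p gives (1 - p) ^+ (k * u) * m ^+ (4 * a) <= 1. *)
Lemma tail_le_inv_pow (C : R) (a j k u : nat) :
    C <= m%:R ^+ a -> (j + 2 <= 3 * a)%N -> a%:R * n%:R <= 2 * B * k%:R * u%:R ->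
  C * (1 - p) ^+ (k * u) <= (m%:R ^+ 2)^-1 * (n%:R^-1) ^+ j.
Proof.
move=> C_le ja hau; set M : R := m%:R; set q := (1 - p) ^+ (k * u).
have q_ge0 : 0 <= q by rewrite exprn_ge0 // subr_ge0.
have n_gt0R : 0 < n%:R :> R by rewrite ltr0n.
have n_le_M : n%:R <= M by rewrite ler_nat.
have M_ge1 : 1 <= M by rewrite ler1n; apply: leq_trans n_le_m.
have M_gt0 : 0 < M by apply: lt_le_trans M_ge1.
have lnM_ge0 : 0 <= ln M by rewrite ln_ge0.
have tail : q * M ^+ (4 * a) <= 1.
  apply: expr_1Br_mul_le1 => //; apply: le_trans (ler_wpM2r (ler0n _ _) p_ge).
  by rewrite mulrAC ler_pdivlMr // !natrM; nra.
have den : M ^+ 2 * n%:R ^+ j <= M ^+ (3 * a).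
  apply: le_trans (_ : M ^+ 2 * M ^+ j <= _).
    by rewrite ler_pM2l ?exprn_gt0 // lerXn2r ?nnegrE ?ler0n ?(ltW M_gt0).
  by rewrite -exprD ler_weXn2l // addnC.
apply: le_trans (_ : M ^+ a * q <= _); first by rewrite ler_wpM2r.
rewrite exprVn -invfM -[_^-1]mul1r ler_pdivlMr ?mulr_gt0 ?exprn_gt0 //.
apply: le_trans tail; rewrite [M ^+ a * q]mulrC -mulrA ler_wpM2l //.
apply: le_trans (ler_wpM2l (exprn_ge0 _ (ltW M_gt0)) den) _.
by rewrite -exprD -mulSn.
Qed.

(* A set T violating Hall's condition has at least u T non-neighbours. *)
Local Notation u T := (m - \sum_(i in T) s i)%N.+1.

Lemma sum_setC_le (T : {set 'I_n}) : (\sum_(i in ~: T) s i <= m - \sum_(i in T) s i)%N.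
Proof. by have := s_sum; rewrite (sum_setC _ T); lia. Qed.

Lemma bad_pairs_bound_small (T : {set 'I_n}) : T != set0 -> (2 * #|T| <= n)%N ->
  'C(m, u T)%:R * (1 - p) ^+ (#|T| * u T)%N <= (m%:R ^+ 2)^-1 * (n%:R^-1) ^+ #|T|.
Proof.
move=> T0 small; set k := #|T|; set sig := (\sum_(i in T) s i)%N.
have k_gt0 : (0 < k)%N by rewrite card_gt0.
have k_le_sig : (k <= sig)%N by rewrite card_leq_sum.
have cardC : #|~: T| = (n - k)%N by rewrite cardsCs setCK card_ord.
apply: (tail_le_inv_pow (a := sig)).
- rewrite -natrX ler_nat -bin_sub; last lia.
  by apply: leq_trans (bin_leq_exp _ _) _; rewrite leq_pexp2l //; lia.
- lia.
have := balanced_sum_le T s_bal; rewrite cardC -/k -/sig.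
have n_le : n%:R <= 2 * (n - k)%:R :> R by rewrite -natrM ler_nat; lia.
have sC_le : (\sum_(j in ~: T) s j)%:R <= (m - sig).+1%:R :> R.
  by rewrite ler_nat ltnW // ltnS sum_setC_le.
have Bk_ge0 : 0 <= B * k%:R by rewrite mulr_ge0 ?ler0n // (le_trans _ B_ge1).
have := ler0n R sig; nra.
Qed.

Lemma bad_pairs_bound_large (T : {set 'I_n}) : (n < 2 * #|T|)%N ->
  'C(m, u T)%:R * (1 - p) ^+ (#|T| * u T)%N <= (m%:R ^+ 2)^-1 * (n%:R^-1) ^+ #|~: T|.
Proof.
move=> large; set sig := (\sum_(i in T) s i)%N.
have nk_le : (#|~: T| <= m - sig)%N := leq_trans (card_leq_sum s_gt0 _) (sum_setC_le T).
apply: (tail_le_inv_pow (a := (m - sig).+1)).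
- by rewrite -natrX ler_nat bin_leq_exp.
- lia.
have n_le : n%:R <= 2 * #|T|%:R :> R by rewrite -natrM ler_nat; lia.
have u_ge0 := ler0n R (m - sig).+1; set u := _%:R in u_ge0 *.
apply: le_trans (ler_wpM2l u_ge0 n_le) _.
have -> : 2 * B * #|T|%:R * u = B * (u * (2 * #|T|%:R)) by ring.
by rewrite ler_peMl // !mulr_ge0 ?ler0n.
Qed.

Lemma bad_pairs_bound (T : {set 'I_n}) : T != set0 ->
  'C(m, u T)%:R * (1 - p) ^+ (#|T| * u T)%N <=
    (m%:R ^+ 2)^-1 * ((n%:R^-1) ^+ #|T| + (n%:R^-1) ^+ #|~: T|).
Proof.
move=> T0; have x_ge0 k : 0 <= (m%:R ^+ 2)^-1 * (n%:R^-1 : R) ^+ k.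
  by rewrite mulr_ge0 ?invr_ge0 ?exprn_ge0 ?invr_ge0 ?ler0n.
rewrite mulrDr; case: (leqP (2 * #|T|) n) => [small|large].
  by apply: le_trans (bad_pairs_bound_small T0 small) _; rewrite lerDl.
by apply: le_trans (bad_pairs_bound_large large) _; rewrite lerDr.
Qed.

Let p_ge0 : 0 <= p.
Proof.
apply: le_trans p_ge.
by rewrite !mulr_ge0 ?invr_ge0 ?ler0n ?ln_ge0 ?ler1n ?(le_trans _ B_ge1) //; lia.
Qed.

Lemma gnmp_prob_no_matching_le_sum :
  gnmp_prob p (predC (has_left_sat_s_matching (m := m) s)) <=
    \sum_(T : {set 'I_n} | T != set0) 'C(m, u T)%:R * (1 - p) ^+ (#|T| * u T)%N.
Proof.
pose P (k : {set 'I_n} * {set 'I_m}) := (k.1 != set0) && (#|k.2| == u k.1).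
apply: le_trans (gnmp_prob_union_bound p_ge0 p_le1 (P := P)
  (Ak := fun k E => setX k.1 k.2 :&: E == set0) _) _.
  move=> E /= no_matching.
  have noF : ~ exists2 F : bigraph n m, F \subset E & sat_matching s F.
    by case=> F FE Fsat; rewrite (sat_matching_has FE Fsat) in no_matching.
  have s_sum' : (\sum_i s i <= #|'I_m|)%N by rewrite card_ord.
  have [T [U [T0 cardU disj]]] := hall_obstruction s_sum' noF.
  by exists (T, U); rewrite /P /= ?T0 ?cardU ?card_ord ?disj eqxx.
rewrite -(pair_big_dep (fun T : {set 'I_n} => T != set0) (fun T (U : {set 'I_m}) => #|U| == u T)
  (fun T U => gnmp_prob p (fun E => setX T U :&: E == set0))) /=.
apply: ler_sum => T _; rewrite (eq_bigr (fun=> (1 - p) ^+ (#|T| * u T))); last first.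
  by move=> U /eqP cardU; rewrite gnmp_prob_disjoint cardsX cardU.
rewrite (eq_bigl (mem [set U : {set 'I_m} | #|U| == u T])); last by move=> U; rewrite !inE.
by rewrite sumr_const card_draws card_ord mulr_natl.
Qed.

Lemma gnmp_prob_no_matching_le :
  gnmp_prob p (predC (has_left_sat_s_matching (m := m) s)) <= 2 * expR 1 / m%:R ^+ 2.
Proof.
apply: le_trans gnmp_prob_no_matching_le_sum _.
apply: le_trans (ler_sum _ bad_pairs_bound) _.
set x : R := n%:R^-1; have x_ge0 : 0 <= x by rewrite invr_ge0 ler0n.
rewrite -mulr_sumr [_ / _]mulrC; apply: ler_wpM2l; first by rewrite invr_ge0 exprn_ge0.
apply: le_trans (_ : _ <= \sum_(T : {set 'I_n}) (x ^+ #|T| + x ^+ #|~: T|)) _.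
  rewrite [X in _ <= X](bigID (fun T => T != set0)) /= lerDl.
  by apply: sumr_ge0 => T _; rewrite addr_ge0 ?exprn_ge0.
have sumX : \sum_(T : {set 'I_n}) x ^+ #|T| = (1 + x) ^+ n.
  rewrite addrC -[X in _ ^+ X](card_ord n) -sum_prod_if.
  by apply: eq_bigr => T _; rewrite expr1n mulr1.
have sumXC : \sum_(T : {set 'I_n}) x ^+ #|~: T| = (1 + x) ^+ n.
  rewrite -[X in _ ^+ X](card_ord n) -sum_prod_if.
  by apply: eq_bigr => T _; rewrite expr1n mul1r.
by rewrite big_split /= sumX sumXC -mulr2n [2 * _]mulr_natl lerMn2r expr_1DVn_le_e ?orbT.
Qed.

End BadPairs.

Unset Implicit Arguments.

Theorem lemma7 (R : realType) (B : R) :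
  1 <= B ->
  forall eps : R, 0 < eps ->
  exists N : nat, forall n m : nat, (N <= n)%N -> (n <= m)%N ->
  forall p : R, 8 * B * ln (m%:R) / n%:R <= p -> p <= 1 ->
  forall s : 'I_n -> nat,
    (forall i, (0 < s i)%N) ->
    (\sum_(i < n) s i <= m)%N ->
    (forall i j, (s i)%:R <= B * (s j)%:R) ->
    1 - eps <= @gnmp_prob R n m p (@has_left_sat_s_matching n m s).
Proof.
move=> B_ge1 eps eps_gt0; exists (Num.truncn (2 * expR 1 / eps)).+1.
move=> n m Nn n_le_m p p_ge p_le1 s s_gt0 s_sum s_bal.
have n_gt0 : (0 < n)%N by apply: leq_trans Nn.
rewrite gnmp_probC lerD2l lerN2.
apply: le_trans (gnmp_prob_no_matching_le B_ge1 n_gt0 n_le_m p_ge p_le1 s_gt0 s_sum s_bal) _.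
have N_lt : 2 * expR 1 / eps < n%:R.
  by apply: lt_le_trans (truncnS_gt _) _; rewrite ler_nat.
have n_le : n%:R <= m%:R ^+ 2 :> R by rewrite -natrX ler_nat; nia.
have m2_gt0 : 0 < m%:R ^+ 2 :> R by rewrite exprn_gt0 // ltr0n; lia.
rewrite ler_pdivrMr // ; rewrite ltr_pdivrMr // in N_lt.
by apply/ltW/(lt_le_trans N_lt); rewrite mulrC ler_pM2l.
Qed.
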